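(* Let $\Omega\subset\mathbb{R}^d$ be open, $E$ a non-trivial locally convex Hausdorff space over $\mathbb{K}$ and $\mathcal{FV}(\Omega)$ a dom-space such that $\mathcal{FV}(\Omega)\subset\mathcal{C}^1(\Omega)$ as a linear subspace. If $\delta\in\mathcal{C}^1(\Omega,\mathcal{FV}(\Omega)'_\kappa)$, where $\delta(x):=\delta_x$, then for all $u\in\mathcal{FV}(\Omega)\varepsilon E$ we have $S(u)\in\mathcal{C}^1(\Omega,E)$ and $(\partial^{e_n})^E S(u)(x)=u(\delta_x\circ(\partial^{e_n})^{\mathbb{K}})$ for all $x\in\Omega$ and $1\le n\le d$.
   Context: $\mathbb{K}\in\{\mathbb{R},\mathbb{C}\}$. For a locally convex space $Z$ and $f\colon\Omega\to Z$, $(\partial^{e_n})^Z f(x):=\lim_{h\to0,\,h\in\mathbb{R}\setminus\{0\}}\frac{f(x+he_n)-f(x)}{h}$ ($e_n$ the $n$-th unit vector); $f\in\mathcal{C}^1(\Omega,Z)$ if these limits exist for all $x$, $n$ and each $(\partial^{e_n})^Z f$ is continuous; $\mathcal{C}^1(\Omega):=\mathcal{C}^1(\Omega,\mathbb{K})$. Framework: $J,M$ non-empty index sets, $(\omega_m)_{m\in M}$ non-empty sets, $\nu_{j,m}\colon\omega_m\to[0,\infty)$ such that for all $m$, $x\in\omega_m$ some $\nu_{j,m}(x)>0$; $\operatorname{AP}(\Omega)\subset\mathbb{K}^\Omega$ a linear subspace; $T_m\colon\operatorname{dom}T_m\to\mathbb{K}^{\omega_m}$ linear maps on linear subspaces of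 $\mathbb{K}^\Omega$; $\mathcal{FV}(\Omega):=\{f\in\operatorname{AP}(\Omega)\cap\bigcap_m\operatorname{dom}T_m: |f|_{j,m}:=\sup_{x\in\omega_m}|T_m(f)(x)|\nu_{j,m}(x)<\infty\ \forall j,m\}$ with these seminorms. It is a dom-space if it is Hausdorff, the seminorms are directed and every $\delta_x\colon f\mapsto f(x)$ belongs to $\mathcal{FV}(\Omega)'$. $\mathcal{FV}(\Omega)'_\kappa$: dual with the topology of uniform convergence on absolutely convex compact subsets of $\mathcal{FV}(\Omega)$. $\mathcal{FV}(\Omega)\varepsilon E$: continuous linear maps $\mathcal{FV}(\Omega)'_\kappa\to E$ with the topology of uniform convergence on equicontinuous sets; $S(u)(x):=u(\delta_x)$. $\delta_x\circ(\partial^{e_n})^{\mathbb{K}}$ is the functional $f\mapsto(\partial^{e_n})^{\mathbb{K}}f(x)$ on $\mathcal{FV}(\Omega)$. *)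

From mathcomp Require Import all_boot all_order all_algebra.
From mathcomp Require Import all_classical all_reals all_analysis.
From mathcomp Require Import complex.
From Stdlib Require List.
Import Order.TTheory GRing.Theory Num.Theory numFieldNormedType.Exports.

Set Implicit Arguments.
Unset Strict Implicit.
Unset Printing Implicit Defensive.

Local Open Scope ring_scope.
Local Open Scope classical_set_scope.

Definition Kfld (R : realType) (b : bool) : numFieldType :=
  if b then (R : numFieldType) else (R[i] : numFieldType).

Definition Kemb (R : realType) (b : bool) : R -> Kfld R b :=
  if b as b' return R -> Kfld R b' then (fun r => r) else (fun r => (r%:C)%C).

Arguments Kfld : clear implicits.
Arguments Kemb : clear implicits.

Section Defs.
Variables (R : realType) (K : numFieldType) (iota : R -> K).
Variables (d : nat) (Om : set 'rV[R]_d).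

(* points of Omega; K^Omega is (pts -> K) *)
Definition pts := {x : 'rV[R]_d | x \in Om}.

Definition ev (n : 'I_d) : 'rV[R]_d := delta_mx 0 n.

(* extension by 0 outside Omega (only used near points of the open set Omega) *)
Definition extf (Z : zmodType) (g : pts -> Z) (y : 'rV[R]_d) : Z :=
  if insub y is Some z then g z else 0.

Definition dquot (Z : lmodType K) (g : pts -> Z) (x : pts) (n : 'I_d) (h : R) : Z :=
  (iota h)^-1 *: (extf g (val x + h *: ev n) - g x).

Definition partial_lim (Z : tvsType K) (g : pts -> Z) (x : pts) (n : 'I_d) (l : Z) :=
  dquot g x n h @[h --> (0 : R)^'] --> l.

Definition C1 (Z : tvsType K) (g : pts -> Z) :=
  exists dg : 'I_d -> pts -> Z,
    (forall n x, partial_lim g x n (dg n x)) /\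
    (forall n, {within Om, continuous (extf (dg n))}).

Definition pdK (f : pts -> K) (n : 'I_d) (x : pts) : K :=
  lim (@dquot K^o f x n h @[h --> (0 : R)^']).

Record framework := Framework {
  fJ : Type;
  fM : Type;
  fom : fM -> Type;
  fnu : fJ -> forall m : fM, fom m -> R;
  fAP : set (pts -> K);
  fdomT : fM -> set (pts -> K);
  fT : forall m : fM, (pts -> K) -> fom m -> K }.

Arguments fom {f} m.
Arguments fnu {f} j m x.
Arguments fT {f} m.
Arguments fAP : clear implicits.
Arguments fdomT : clear implicits.

Definition lin_comb (X : Type) (a : K) (f g : X -> K) : X -> K :=
  fun z => a * f z + g z.

Definition is_subspace (X : Type) (A : set (X -> K)) :=
  A (fun _ => 0) /\ forall a f g, A f -> A g -> A (lin_comb a f g).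

Variable W : framework.

Definition framework_ok :=
  [/\ inhabited (fJ W), inhabited (fM W),
      (forall m : fM W, inhabited (fom m)),
      (forall (j : fJ W) (m : fM W) x, 0 <= fnu j m x) &
      (forall (m : fM W) x, exists j, 0 < fnu j m x)] /\
  [/\ is_subspace (fAP W),
      (forall m, is_subspace (fdomT W m)) &
      (forall m a f g, fdomT W m f -> fdomT W m g ->
         fT m (lin_comb a f g) = lin_comb a (fT m f) (fT m g))].

(* |f|_{j,m} <= s, i.e. s bounds { |T_m(f)(x)| nu_{j,m}(x) : x in omega_m } *)
Definition sn_le (j : fJ W) (m : fM W) (f : pts -> K) (s : R) :=
  forall x : fom m, `|fT m f x| * iota (fnu j m x) <= iota s.

(* |f|_{j,m} < e  (sup < e iff some upper bound s < e) *)
Definition sn_lt (j : fJ W) (m : fM W) (f : pts -> K) (e : R) :=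
  exists s, s < e /\ sn_le j m f s.

Definition FV (f : pts -> K) :=
  [/\ fAP W f, (forall m, fdomT W m f) & (forall (j : fJ W) (m : fM W), exists s, sn_le j m f s)].

Definition dif (X : Type) (f g : X -> K) : X -> K := fun z => f z - g z.

(* neighbourhood base of f in FV(Omega) for the topology induced by the
   seminorms: finite intersections of seminorm balls *)
Definition FV_nbhs (f : pts -> K) : set_system (pts -> K) :=
  [set A | exists (I : seq (fJ W * fM W)) (e : R), 0 < e /\
     (FV `&` [set g | forall i, List.In i I -> sn_lt i.1 i.2 (dif g f) e]) `<=` A].

Definition FV_hausdorff :=
  forall f g, FV f -> FV g ->
    (forall A B, FV_nbhs f A -> FV_nbhs g B -> A `&` B !=set0) -> f = g.

Definition FV_directed :=
  forall (j1 : fJ W) (m1 : fM W) (j2 : fJ W) (m2 : fM W),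
    exists (j3 : fJ W) (m3 : fM W) (C : R), 0 < C /\
    forall f, FV f -> forall s, sn_le j3 m3 f s ->
      sn_le j1 m1 f (C * s) /\ sn_le j2 m2 f (C * s).

(* phi belongs to the dual FV(Omega)' (only its values on FV matter) *)
Definition FV_dual (phi : (pts -> K) -> K) :=
  (forall a f g, FV f -> FV g -> phi (lin_comb a f g) = a * phi f + phi g) /\
  (forall f, FV f -> forall e : R, 0 < e ->
     FV_nbhs f [set g | `|phi g - phi f| < iota e]).

Definition delta (x : pts) : (pts -> K) -> K := fun f => f x.

Definition dom_space :=
  [/\ FV_hausdorff, FV_directed & forall x, FV_dual (delta x)].

Definition abs_convex (A : set (pts -> K)) :=
  forall f g (a b : K), A f -> A g -> `|a| + `|b| <= 1 ->
    A (fun z => a * f z + b * g z).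

Definition FV_compact (A : set (pts -> K)) :=
  A `<=` FV /\
  forall F : set_system (pts -> K), ProperFilter F -> F A ->
    exists f, A f /\ forall B C, F B -> FV_nbhs f C -> B `&` C !=set0.

Definition kappa_nbhs (phi : (pts -> K) -> K) : set_system ((pts -> K) -> K) :=
  [set U | exists (A : set (pts -> K)) (e : R),
     [/\ abs_convex A, FV_compact A, 0 < e &
         [set psi | forall f, A f -> `|psi f - phi f| < iota e] `<=` U]].

Definition extD (g : pts -> (pts -> K) -> K) (y : 'rV[R]_d) : (pts -> K) -> K :=
  if insub y is Some z then g z else (fun _ => 0).

Definition dquot_dual (g : pts -> (pts -> K) -> K) (x : pts) (n : 'I_d) (h : R)
  : (pts -> K) -> K :=
  fun f => (iota h)^-1 * (extD g (val x + h *: ev n) f - g x f).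

Definition C1_dual (g : pts -> (pts -> K) -> K) :=
  (forall x, FV_dual (g x)) /\
  exists dg : 'I_d -> pts -> (pts -> K) -> K,
    [/\ (forall n x, FV_dual (dg n x)),
        (forall n x, dquot_dual g x n h @[h --> (0 : R)^'] `=>` kappa_nbhs (dg n x)) &
        (forall n x, extD (dg n) y @[y --> within Om (nbhs (val x))]
                        `=>` kappa_nbhs (dg n x))].

(* u in FV(Omega) eps E: continuous linear maps FV(Omega)'_kappa -> E *)
Definition eps_prod (E : tvsType K) (u : ((pts -> K) -> K) -> E) :=
  (forall a phi psi, FV_dual phi -> FV_dual psi ->
     u (fun f => a * phi f + psi f) = a *: u phi + u psi) /\
  (forall phi, FV_dual phi -> forall U, nbhs (u phi) U ->
     exists V, kappa_nbhs phi V /\ forall psi, FV_dual psi -> V psi -> U (u psi)).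

Definition Smap (E : tvsType K) (u : ((pts -> K) -> K) -> E) : pts -> E :=
  fun x => u (delta x).

End Defs.

(* The difference quotients of S(u) = u o delta are, by linearity of u, the
   images under u of the difference quotients of delta, which converge in
   FV(Omega)'_kappa; continuity of u then yields the partial derivatives
   u (d^{e_n} delta (x)) of S(u), and their continuity.  Testing the kappa
   convergence on the absolutely convex compact set {c f : |c| <= 1} (compact
   because the closed unit disk of K is) shows that d^{e_n} delta (x) agrees
   with delta_x o d^{e_n} on FV(Omega).  Since the kappa neighbourhoods only
   test functionals on compact subsets of FV(Omega) and E is Hausdorff, u
   takes the same value on both functionals. *)

From mathcomp Require Import all_boot all_order all_algebra.
From mathcomp Require Import all_classical all_reals all_analysis.
From mathcomp Require Import complex.
From Stdlib Require List.
Import Order.TTheory GRing.Theory Num.Theory numFieldNormedType.Exports.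
Set Implicit Arguments.
Unset Strict Implicit.
Unset Printing Implicit Defensive.

Local Open Scope ring_scope.
Local Open Scope classical_set_scope.

Section ComplexDisk.
Variable R : realType.
Local Open Scope complex_scope.

Lemma normcR (r : R) : `|r%:C| = `|r|%:C.
Proof. by rewrite normc_def /= expr0n addr0 sqrtr_sqr. Qed.

Lemma normc_ge_Im (z : R[i]) : `|complex.Im z|%:C <= `|z|.
Proof.
have := normc_ge_Re (z * 'i%C).
by rewrite ReiNIm normrN normrM complexiE normCi mulr1.
Qed.

Lemma normc_le_Re_Im (z : R[i]) : `|z| <= (`|complex.Re z| + `|complex.Im z|)%:C.
Proof.
rewrite {1}[z]complexE rmorphD; apply: le_trans (ler_normD _ _) _.
by rewrite normrM complexiE normCi mul1r !normcR.
Qed.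

Lemma compact_complex_disk : compact [set z : (R[i] : numFieldType) | `|z| <= 1].
Proof.
move=> G PG G1.
pose reim (z : R[i]) := (complex.Re z, complex.Im z).
have square_compact : compact (`[-1, 1] `*` `[-1, 1] : set (R * R)).
  by apply: compact_setX; exact: segment_compact.
have G_square : G (reim @^-1` (`[-1, 1] `*` `[-1, 1])).
  apply: filterS G1 => z z1.
  split; rewrite /= in_itv /= -ler_norml -lecR; apply: le_trans z1.
    exact: normc_ge_Re.
  exact: normc_ge_Im.
have [[a b] [_ cl_ab]] := square_compact _ (fmap_proper_filter reim PG) G_square.
have approx S : G S -> forall r : R, 0 < r -> exists2 z, S z & `|z - a +i* b| < r%:C.
  move=> GS r r0.
  have r20 : 0 < r / 2 by rewrite divr_gt0.
  have GS' : G (reim @^-1` (reim @` S)) by apply: filterS GS => z Sz; exists z.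
  have [_ [[z Sz <-] [/= za zb]]] := cl_ab _ _ GS' (nbhsx_ballx (a, b) _ r20).
  exists z => //; apply: le_lt_trans (normc_le_Re_Im _) _.
  case: z {Sz} za zb => x y; rewrite /ball /= => xa yb.
  by rewrite ltcR [r]splitr ltrD // distrC.
have [r normab] : exists r, `|a +i* b| = r%:C by rewrite normc_def; eexists.
exists (a +i* b); split.
  rewrite /= normab lecR; apply/ler_addgt0Pr => e e0.
  have [z z1 ze] := approx _ G1 e e0.
  rewrite -lecR rmorphD -normab -[a +i* b](subrK z) /=.
  apply: le_trans (ler_normD _ _) _.
  by rewrite addrC lerD // distrC ltW.
move=> S B GS /nbhs_ballP[e /= e0 sB].
have [s es] : exists s, e = s%:C by apply/complex_realP; exact: gtr0_real.
have s0 : 0 < s by rewrite -ltcR -es.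
have [z Sz ze] := approx S GS s s0.
by exists z; split => //; apply: sB; rewrite -ball_normE /= distrC es.
Qed.
End ComplexDisk.

Section ScalarField.
Variables (R : realType) (b : bool).
Local Notation iota := (Kemb R b).

Lemma Kemb_add r s : iota (r + s) = iota r + iota s.
Proof. by case: b => //=; rewrite rmorphD. Qed.

Lemma Kemb_mul r s : iota (r * s) = iota r * iota s.
Proof. by case: b => //=; rewrite rmorphM. Qed.

Lemma Kemb_le r s : (iota r <= iota s) = (r <= s).
Proof. by case: b => //=; rewrite lecR. Qed.

Lemma Kemb_norm (a : Kfld R b) : exists r, `|a| = iota r.
Proof. by case: b a => /= a; [exists `|a| | rewrite normc_def; eexists]. Qed.

Lemma compact_Kfld_disk : compact [set c : Kfld R b | `|c| <= 1].
Proof.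
case: b; last exact: compact_complex_disk.
rewrite (_ : [set c | _] = `[-1, 1]); first exact: segment_compact.
by apply/seteqP; split => c; rewrite /= in_itv /= ler_norml.
Qed.

End ScalarField.

Section FVSpace.
Variables (R : realType) (K : numFieldType) (iota : R -> K).
Hypothesis iotaD : forall r s, iota (r + s) = iota r + iota s.
Hypothesis iotaM : forall r s, iota (r * s) = iota r * iota s.
Hypothesis iota_le : forall r s, (iota r <= iota s) = (r <= s).
Hypothesis iota_norm : forall a : K, exists r, `|a| = iota r.
Hypothesis compact_disk : compact [set c : K | `|c| <= 1].

Lemma iota0 : iota 0 = 0.
Proof. by apply: (addrI (iota 0)); rewrite -iotaD !addr0. Qed.

Lemma iota_inj : injective iota.
Proof. by move=> r s rs; apply/le_anti; rewrite -!iota_le rs lexx. Qed.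

Lemma iota_lt r s : (iota r < iota s) = (r < s).
Proof. by rewrite !lt_def iota_le (inj_eq iota_inj). Qed.

Lemma iota_ge0 r : (0 <= iota r) = (0 <= r).
Proof. by rewrite -iota0 iota_le. Qed.

Lemma iota_gt0 r : (0 < iota r) = (0 < r).
Proof. by rewrite -iota0 iota_lt. Qed.

Lemma iota_norm_ge0 (a : K) : exists2 r, 0 <= r & `|a| = iota r.
Proof. by have [r ar] := iota_norm a; exists r; rewrite // -iota_ge0 -ar. Qed.

Lemma iota_pos (e : K) : 0 < e -> exists2 r, 0 < r & e = iota r.
Proof.
move=> e0; have [r er] := iota_norm e.
by exists r; rewrite -?iota_gt0 -er gtr0_norm.
Qed.

Variables (d : nat) (Om : set 'rV[R]_d) (W : framework K Om).
Hypothesis Wok : framework_ok W.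
Local Notation pts := (pts Om).
Local Notation FVf := (FV iota W).
Local Notation FVd := (FV_dual iota W).

Lemma nu_ge0 (j : fJ W) (m : fM W) (x : fom m) : 0 <= iota (fnu j x).
Proof. by case: Wok => -[_ _ _ nu0 _] _; rewrite iota_ge0. Qed.

Lemma domT0 (m : fM W) : fdomT m (fun _ => 0).
Proof. by case: Wok => _ [_ /(_ m) [] ]. Qed.

Lemma lin_comb0r (a : K) (f : pts -> K) :
  lin_comb a f (fun _ => 0) = (fun z => a * f z).
Proof. by apply: funext => z; rewrite /lin_comb addr0. Qed.

Lemma fT0 (m : fM W) (x : fom m) : fT (fun _ => 0) x = 0.
Proof.
case: Wok => _ [_ _ /(_ m 1 _ _ (domT0 m) (domT0 m))].
rewrite lin_comb0r (_ : (fun _ => 1 * 0) = (fun _ => 0)); last first.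
  by apply: funext => z; rewrite mulr0.
move=> /(congr1 (fun T => T x)); rewrite /lin_comb mul1r.
by move=> /(canLR (addrK _)); rewrite subrr.
Qed.

Lemma sn_le_trans (j : fJ W) (m : fM W) (f : pts -> K) s s' :
  s <= s' -> sn_le iota j m f s -> sn_le iota j m f s'.
Proof. by move=> ss' fs x; apply: le_trans (fs x) _; rewrite iota_le. Qed.

Lemma sn_lt_trans (j : fJ W) (m : fM W) (f : pts -> K) e e' :
  e <= e' -> sn_lt iota j m f e -> sn_lt iota j m f e'.
Proof. by move=> ee' [s [se fs]]; exists s; split => //; apply: lt_le_trans ee'. Qed.

Lemma sn_le0 (j : fJ W) (m : fM W) : sn_le iota j m (fun _ => 0) 0.
Proof. by move=> x; rewrite fT0 normr0 mul0r iota0. Qed.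

Lemma sn_le_lin (j : fJ W) (m : fM W) (a : K) (f g : pts -> K) r s1 s2 :
  fdomT m f -> fdomT m g -> `|a| = iota r ->
  sn_le iota j m f s1 -> sn_le iota j m g s2 ->
  sn_le iota j m (lin_comb a f g) (r * s1 + s2).
Proof.
case: Wok => _ [_ _ Tlin] domf domg ar fs1 gs2 x.
rewrite Tlin // /lin_comb iotaD iotaM -ar.
apply: le_trans (_ : (`|a| * `|fT f x| + `|fT g x|) * iota (fnu j x) <= _).
  by apply: ler_wpM2r; [exact: nu_ge0 | rewrite -normrM ler_normD].
by rewrite mulrDl -mulrA lerD // ler_wpM2l.
Qed.

Lemma sn_le_scale (j : fJ W) (m : fM W) (c : K) (f : pts -> K) r s : fdomT m f ->
  `|c| = iota r -> sn_le iota j m f s -> sn_le iota j m (fun z => c * f z) (r * s).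
Proof.
move=> domf cr fs; rewrite -lin_comb0r -[r * s]addr0.
exact: sn_le_lin domf (domT0 m) cr fs (@sn_le0 j m).
Qed.

Lemma FV0 : FVf (fun _ => 0).
Proof.
case: (Wok) => _ [[AP0 _] _ _]; split=> // [m|j m]; first exact: domT0.
by exists 0; exact: sn_le0.
Qed.

Lemma FV_lin (a : K) (f g : pts -> K) : FVf f -> FVf g -> FVf (lin_comb a f g).
Proof.
case=> APf domf snf [APg domg sng]; have [r ar] := iota_norm a.
case: (Wok) => _ [[_ APlin] domlin _]; split=> [|m|j m]; first exact: APlin.
  exact: (domlin m).2.
have [s1 fs1] := snf j m; have [s2 gs2] := sng j m.
by exists (r * s1 + s2); exact: sn_le_lin.
Qed.

Lemma FV_scale (c : K) (f : pts -> K) : FVf f -> FVf (fun z => c * f z).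
Proof. by move=> Ff; rewrite -lin_comb0r; exact: FV_lin FV0. Qed.

Lemma FV_nbhsS (f : pts -> K) (A B : set (pts -> K)) :
  FV_nbhs iota W f A -> (forall g, FVf g -> A g -> B g) -> FV_nbhs iota W f B.
Proof.
move=> [I [e [e0 sA]]] AB; exists I, e; split => // g [Fg gI].
by apply: AB => //; apply: sA.
Qed.

Lemma FV_nbhsI (f : pts -> K) (A B : set (pts -> K)) :
  FV_nbhs iota W f A -> FV_nbhs iota W f B -> FV_nbhs iota W f (A `&` B).
Proof.
move=> [I1 [e1 [e10 sA]]] [I2 [e2 [e20 sB]]].
exists (I1 ++ I2)%list, (Num.min e1 e2); split; first by rewrite lt_min e10.
move=> g [Fg gI]; split; [apply: sA | apply: sB]; split => // i iI.
- apply: sn_lt_trans (gI i _); first by rewrite ge_min lexx.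
  by apply: List.in_or_app; left.
- apply: sn_lt_trans (gI i _); first by rewrite ge_min lexx orbT.
  by apply: List.in_or_app; right.
Qed.

Lemma FV_dual0 : FVd (fun _ => 0).
Proof.
split=> [a f g _ _|f Ff e e0]; first by rewrite mulr0 addr0.
by exists nil, 1; split => // g _ /=; rewrite subrr normr0 iota_gt0.
Qed.

Lemma FV_dual_lin (a : K) (phi psi : (pts -> K) -> K) : FVd phi -> FVd psi ->
  FVd (fun f => a * phi f + psi f).
Proof.
move=> [phi_lin phi_cont] [psi_lin psi_cont]; split=> [a' f g Ff Fg|f Ff e e0].
  rewrite phi_lin // psi_lin //.
  by rewrite mulrDr mulrA (mulrC a a') -mulrA addrACA mulrDr addrA.
have [r r0 ar] := iota_norm_ge0 a.
have r10 : 0 < r + 1 by rewrite ltr_wpDl.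
have e20 : 0 < e / 2 by rewrite divr_gt0.
have e2r0 : 0 < e / 2 / (r + 1) by rewrite divr_gt0.
apply: (FV_nbhsS (FV_nbhsI (phi_cont f Ff _ e2r0) (psi_cont f Ff _ e20))).
move=> g Fg [/= phig psig].
rewrite opprD addrACA -mulrBr; apply: le_lt_trans (ler_normD _ _) _.
rewrite [e]splitr iotaD ler_ltD // normrM ar.
apply: le_trans (_ : iota r * iota (e / 2 / (r + 1)) <= _).
  by rewrite ler_wpM2l ?iota_ge0 // ltW.
by rewrite -iotaM iota_le mulrA ler_pdivrMr // mulrC ler_wpM2l ?lerDl ?(ltW e20).
Qed.

Lemma FV_dual_scaleB (a : K) (phi psi : (pts -> K) -> K) : FVd phi -> FVd psi ->
  FVd (fun f => a * (phi f - psi f)).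
Proof.
move=> Fphi Fpsi.
have := FV_dual_lin a Fphi (FV_dual_lin (- a) Fpsi FV_dual0).
by congr FV_dual; apply: funext => f; rewrite addr0 mulNr mulrBr.
Qed.

Lemma FV_dual_ext (phi psi : (pts -> K) -> K) : FVd phi ->
  (forall f, FVf f -> psi f = phi f) -> FVd psi.
Proof.
move=> [phi_lin phi_cont] psi_phi; split=> [a f g Ff Fg|f Ff e e0].
  by rewrite !psi_phi ?phi_lin //; exact: FV_lin.
apply: (FV_nbhsS (phi_cont f Ff e e0)) => g Fg /=.
by rewrite !psi_phi.
Qed.

Lemma FV_dual_extD (g : pts -> (pts -> K) -> K) y :
  (forall x, FVd (g x)) -> FVd (extD g y).
Proof.
by move=> Fg; rewrite /extD; case: insub => [z|]; [exact: Fg | exact: FV_dual0].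
Qed.

Lemma FV_dual_dquot_dual (g : pts -> (pts -> K) -> K) x n h :
  (forall x, FVd (g x)) -> FVd (dquot_dual iota g x n h).
Proof. by move=> Fg; apply: FV_dual_scaleB (FV_dual_extD _ Fg) (Fg x). Qed.

Definition scaled_disk (f : pts -> K) : set (pts -> K) :=
  [set g | exists c : K, `|c| <= 1 /\ g = (fun z => c * f z)].

Lemma scaled_disk_id f : scaled_disk f f.
Proof. by exists 1; rewrite normr1; split => //; apply: funext => z; rewrite mul1r. Qed.

Lemma abs_convex_scaled_disk f : abs_convex (scaled_disk f).
Proof.
move=> _ _ a b [c1 [c11 ->]] [c2 [c21 ->]] ab1; exists (a * c1 + b * c2); split.
  apply: le_trans (ler_normD _ _) (le_trans _ ab1).
  by rewrite !normrM lerD // ler_piMr.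
by apply: funext => z; rewrite mulrDl !mulrA.
Qed.

Lemma FV_seminorm_bound f (I : seq (fJ W * fM W)) : FVf f ->
  exists2 M, 0 <= M & forall i, List.In i I -> sn_le iota i.1 i.2 f M.
Proof.
case=> _ _ snf; elim: I => [|i0 I [M M0 fM]]; first by exists 0.
have [s fs] := snf i0.1 i0.2.
exists (Num.max M s) => [|i [<-|iI]]; first by rewrite le_max M0.
  by apply: sn_le_trans fs; rewrite le_max lexx orbT.
by apply: sn_le_trans (fM i iI); rewrite le_max lexx.
Qed.

Lemma FV_compact_scaled_disk f : FVf f -> FV_compact iota W (scaled_disk f).
Proof.
move=> Ff; have disk_FV : scaled_disk f `<=` FVf.
  by move=> _ [c [_ ->]]; exact: FV_scale.
split=> // F PF Fdisk.
(* [coef g] is some admissible scalar: it is not unique when [f = 0]. *)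
pose coef g := xget 0 [set c : K | `|c| <= 1 /\ g = (fun z => c * f z)].
have coefP g : scaled_disk f g -> `|coef g| <= 1 /\ g = (fun z => coef g * f z).
  exact: xgetPex.
have F_coef : F (coef @^-1` [set c | `|c| <= 1]) by apply: filterS Fdisk => g /coefP[].
have [c0 [c01 cl_c0]] := compact_disk (fmap_proper_filter coef PF) F_coef.
exists (fun z => c0 * f z); split; first by exists c0.
move=> B C FB [I [e [e0 sC]]].
have [M M0 fM] := FV_seminorm_bound I Ff.
have M10 : 0 < M + 1 by rewrite ltr_wpDl.
have eps0 : 0 < iota (e / (M + 1)) by rewrite iota_gt0 divr_gt0.
have F_B : F (coef @^-1` (coef @` (B `&` scaled_disk f))).
  by apply: filterS (filterI FB Fdisk) => g Bg; exists g.
have [_ [[g [Bg Dg] <-] g_near]] :=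
  cl_c0 _ _ F_B (nbhsx_ballx c0 (iota (e / (M + 1))) eps0).
exists g; split => //; apply: sC; split; first exact: disk_FV.
move=> i iI; have [r r0 gc0r] := iota_norm_ge0 (coef g - c0).
exists (r * M); split.
  move: g_near; rewrite -ball_normE /= distrC gc0r iota_lt => r_lt.
  apply: le_lt_trans (_ : r * (M + 1) < e); first by rewrite ler_wpM2l // lerDl.
  by rewrite -ltr_pdivlMr.
rewrite /dif {1}(coefP g Dg).2.
have -> : (fun z => coef g * f z - c0 * f z) = (fun z => (coef g - c0) * f z).
  by apply: funext => z; rewrite mulrBl.
by apply: sn_le_scale gc0r (fM i iI); case: Ff.
Qed.

Lemma kappa_cvg_FV (T : Type) (F : set_system T) {FF : Filter F}
    (g : T -> (pts -> K) -> K) phi f :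
  g @ F `=>` kappa_nbhs iota W phi -> FVf f ->
  (fun t => g t f) @ F --> phi f.
Proof.
move=> g_phi Ff; apply/cvgrPdist_lt => _ /iota_pos[e e0 ->].
have kappa_V : kappa_nbhs iota W phi
    [set psi | forall h, scaled_disk f h -> `|psi h - phi h| < iota e].
  exists (scaled_disk f), e; split => //.
    exact: abs_convex_scaled_disk.
  exact: FV_compact_scaled_disk.
apply: (@filterS _ F _ _ _ _ (g_phi _ kappa_V)) => t /(_ f (scaled_disk_id f)).
by rewrite distrC.
Qed.

Lemma pdK_kappa_derivative (D : (pts -> K) -> K) x n f :
  dquot_dual iota (@delta R K d Om) x n h @[h --> (0 : R)^'] `=>` kappa_nbhs iota W D ->
  FVf f -> pdK iota f n x = D f.
Proof.
move=> dquot_D Ff; apply: cvg_lim; first exact: norm_hausdorff.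
have -> : @dquot R K iota d Om K^o f x n =
    (fun h => dquot_dual iota (@delta R K d Om) x n h f).
  by apply: funext => h; rewrite /dquot_dual /dquot /extD /extf; case: insub.
exact: kappa_cvg_FV dquot_D Ff.
Qed.

Section EpsilonProduct.
Variables (E : tvsType K) (u : ((pts -> K) -> K) -> E).
Hypothesis hu : eps_prod iota W u.
Hypothesis hE : hausdorff_space E.

Lemma eps_prod0 : u (fun _ => 0) = 0.
Proof.
have := hu.1 1 _ _ FV_dual0 FV_dual0.
rewrite (_ : (fun f => 1 * 0 + 0) = (fun _ => 0)); last first.
  by apply: funext => f; rewrite mulr0 addr0.
by rewrite scale1r => /(canLR (addrK _)); rewrite subrr.
Qed.

Lemma eps_prod_scaleB (a : K) phi psi : FVd phi -> FVd psi ->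
  u (fun f => a * (phi f - psi f)) = a *: (u phi - u psi).
Proof.
move=> Fphi Fpsi.
rewrite (_ : (fun f => _) = (fun f => a * phi f + ((- a) * psi f + 0))); last first.
  by apply: funext => f; rewrite addr0 mulNr mulrBr.
rewrite hu.1 //; last exact: FV_dual_lin FV_dual0.
rewrite hu.1 //; last exact: FV_dual0.
by rewrite eps_prod0 addr0 scaleNr scalerBr.
Qed.

Lemma eps_prod_cvg (T : Type) (F : set_system T) {FF : Filter F}
    (g : T -> (pts -> K) -> K) phi :
  FVd phi -> (forall t, FVd (g t)) ->
  g @ F `=>` kappa_nbhs iota W phi -> (fun t => u (g t)) @ F --> u phi.
Proof.
move=> Fphi Fg g_phi U /(hu.2 _ Fphi)[V [kappa_V VU]].
by apply: (@filterS _ F _ _ _ _ (g_phi _ kappa_V)) => t; exact: VU.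
Qed.

Lemma eps_prod_ext phi psi : FVd phi ->
  (forall f, FVf f -> psi f = phi f) -> u psi = u phi.
Proof.
move=> Fphi psi_phi; have Fpsi := FV_dual_ext Fphi psi_phi.
apply: hE => A B A_psi /(hu.2 _ Fphi)[V [[C [e [_ [C_FV _] e0 CV]]] VB]].
exists (u psi); split; first exact: nbhs_singleton.
apply: VB Fpsi (CV _ _) => f Cf.
by rewrite psi_phi ?subrr ?normr0 ?iota_gt0 //; exact: C_FV.
Qed.

Lemma extf_eps_prod (g : pts -> (pts -> K) -> K) :
  extf (fun x => u (g x)) = (fun y => u (extD g y)).
Proof. by apply: funext => y; rewrite /extf /extD; case: insub; rewrite ?eps_prod0. Qed.

Lemma dquot_eps_prod (g : pts -> (pts -> K) -> K) x n h : (forall x, FVd (g x)) ->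
  dquot iota (fun x => u (g x)) x n h = u (dquot_dual iota g x n h).
Proof.
move=> Fg; rewrite /dquot_dual (eps_prod_scaleB _ (FV_dual_extD _ Fg) (Fg x)).
by rewrite /dquot extf_eps_prod.
Qed.

Theorem Smap_C1 : C1_dual iota W (@delta R K d Om) ->
  C1 iota (Smap u) /\
  forall x n, partial_lim iota (Smap u) x n (u (fun f => pdK iota f n x)).
Proof.
case=> Fdelta [D [FD D_dquot D_cont]].
have Smap_partial x n : partial_lim iota (Smap u) x n (u (D n x)).
  rewrite /partial_lim /Smap.
  under eq_fun do rewrite dquot_eps_prod //.
  exact: eps_prod_cvg (FD n x) (fun h => FV_dual_dquot_dual x n h Fdelta) (D_dquot n x).
split=> [|x n].
  exists (fun n x => u (D n x)); split => // n.
  apply/subspace_continuousP => y Omy; rewrite /from_subspace extf_eps_prod.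
  pose x : pts := exist _ y (mem_set Omy).
  have -> : extD (D n) y = D n x by rewrite /extD (_ : y = val x) // valK.
  apply: eps_prod_cvg (FD n x) _ _ => [t|]; first exact: FV_dual_extD.
  exact: D_cont n x.
by rewrite (eps_prod_ext (FD n x) (fun f => pdK_kappa_derivative (D_dquot n x))).
Qed.

End EpsilonProduct.

End FVSpace.

Theorem proposition4p10 (R : realType) (b : bool) (d : nat) (Om : set 'rV[R]_d)
  (E : tvsType (Kfld R b)) (W : framework (Kfld R b) Om) :
  open Om ->
  hausdorff_space E -> (exists y : E, y != 0) ->
  framework_ok W ->
  dom_space (Kemb R b) W ->
  (forall f, FV (Kemb R b) W f -> @C1 R (Kfld R b) (Kemb R b) d Om (Kfld R b)^o f) ->
  C1_dual (Kemb R b) W (@delta R (Kfld R b) d Om) ->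
  forall u : ((pts Om -> Kfld R b) -> Kfld R b) -> E,
    eps_prod (Kemb R b) W u ->
    C1 (Kemb R b) (Smap u) /\
    (forall (x : pts Om) (n : 'I_d),
       partial_lim (Kemb R b) (Smap u) x n (u (fun f => pdK (Kemb R b) f n x))).
Proof.
move=> _ hE _ Wok _ _ hC1 u hu.
exact: (Smap_C1 (Kemb_add b) (Kemb_mul b) (Kemb_le b) (@Kemb_norm R b)
  (@compact_Kfld_disk R b) Wok hu hE hC1).
Qed.
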